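(* Let $\mathcal N_2$ be the multiset $\{\{(w_2+\omega,w_3,w_1)\in\mathbb F_q^{3m}: w_1\in\Delta_A^c,\ w_2\in\Delta_B,\ w_3\in\Delta_C,\ \omega\in\{\mathbf 0,w_1\}\}\}$ (assuming $|A|<m$) and $\mathcal N_4$ the multiset $\{\{(w_2+\omega,w_3,w_1)\in\mathbb F_q^{3m}: w_1\in\Delta_A^*,\ w_2\in\Delta_B,\ w_3\in\Delta_C^c,\ \omega\in\{\mathbf 0,w_1\}\}\}$ (assuming $|C|<m$, $|A|\ge2$), where each multiset contains one element for each admissible tuple $(w_1,w_2,w_3,\omega)$. (a) If $B\subseteq A$, then all elements of $\mathcal N_2$ are distinct, and there is a subset $\overline{\mathcal N}_2\subseteq\mathcal N_2$ with $|\overline{\mathcal N}_2|=|\mathcal N_2|/(q-1)$, whose elements span pairwise distinct one-dimensional subspaces of $\mathbb F_q^{3m}$, such that $\mathcal N_2=\{\alpha x: x\in\overline{\mathcal N}_2,\ \alpha\in\mathbb F_q^*\}$. (b) If $A\cap B=\emptyset$, then all elements of $\mathcal N_4$ are distinct, and there is a subset $\overline{\mathcal N}_4\subseteq\mathcal N_4$ with $|\overline{\mathcal N}_4|=|\mathcal N_4|/(q-1)$, whose elements span pairwise distinct one-dimensional subspaces, such that $\mathcal N_4=\{\alpha x: x\in\overline{\mathcal N}_4,\ \alpha\in\mathbb F_q^*\}$.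
   Context: $q$ is a prime power, $\mathbb F_q$ the field of order $q$, $\mathbb F_q^*=\mathbb F_q\setminus\{0\}$, $m\ge2$, $[m]=\{1,\dots,m\}$, $\mathrm{supp}(v)=\{i:v_i\ne0\}$ for $v\in\mathbb F_q^m$. For nonempty $P\subseteq[m]$, $\Delta_P=\{v\in\mathbb F_q^m:\mathrm{supp}(v)\subseteq P\}$, $\Delta_P^c=\mathbb F_q^m\setminus\Delta_P$, $\Delta_P^*=\Delta_P\setminus\{\mathbf 0\}$. $A,B,C$ are nonempty subsets of $[m]$. Elements of $\mathbb F_q^{3m}$ are written $(x,y,z)$ with $x,y,z\in\mathbb F_q^m$. *)

From HB Require Import structures.
From mathcomp Require Import all_boot all_order all_algebra all_field.
Set Implicit Arguments. Unset Strict Implicit. Unset Printing Implicit Defensive.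
Import GRing.Theory.
Local Open Scope ring_scope.

(* Vectors of F_q^m are row vectors 'rV[F]_m; F_q^{3m} is 'rV[F]_(m+m+m),
   and (x,y,z) is the concatenation row_mx (row_mx x y) z. *)

Definition supp (F : finFieldType) (m : nat) (v : 'rV[F]_m) : {set 'I_m} :=
  [set i | v 0 i != 0].

Definition inDelta (F : finFieldType) (m : nat) (P : {set 'I_m}) (v : 'rV[F]_m) : bool :=
  supp v \subset P.

Definition triple (F : finFieldType) (m : nat) (x y z : 'rV[F]_m) : 'rV[F]_(m + m + m) :=
  row_mx (row_mx x y) z.

(* Admissible tuples (w1,w2,w3,omega); omega is encoded by a bool b:
   b = false <-> omega = 0, b = true <-> omega = w1. *)
Definition omega (F : finFieldType) (m : nat) (w1 : 'rV[F]_m) (b : bool) : 'rV[F]_m :=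
  if b then w1 else 0.

Definition elt (F : finFieldType) (m : nat)
  (t : 'rV[F]_m * 'rV[F]_m * 'rV[F]_m * bool) : 'rV[F]_(m + m + m) :=
  let '(w1, w2, w3, b) := t in triple (w2 + omega w1 b) w3 w1.

Definition N2 (F : finFieldType) (m : nat) (A B C : {set 'I_m}) : seq 'rV[F]_(m + m + m) :=
  [seq elt t | t <- enum [pred t : 'rV[F]_m * 'rV[F]_m * 'rV[F]_m * bool |
     let '(w1, w2, w3, b) := t in
     [&& ~~ inDelta A w1, inDelta B w2 & inDelta C w3]]].

Definition N4 (F : finFieldType) (m : nat) (A B C : {set 'I_m}) : seq 'rV[F]_(m + m + m) :=
  [seq elt t | t <- enum [pred t : 'rV[F]_m * 'rV[F]_m * 'rV[F]_m * bool |
     let '(w1, w2, w3, b) := t in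
     [&& inDelta A w1, w1 != 0, inDelta B w2 & ~~ inDelta C w3]]].

Definition projective_reduction (F : finFieldType) (n : nat) (N : seq 'rV[F]_n) : Prop :=
  uniq N /\
  exists Nbar : {set 'rV[F]_n},
    [/\ {subset Nbar <= N},
        (#|Nbar| * (#|F| - 1) = size N)%N,
        (forall x, x \in Nbar -> \dim <[x]>%VS = 1%N),
        (forall x y, x \in Nbar -> y \in Nbar -> x != y -> <[x]>%VS != <[y]>%VS) &
        [set x in N] = [set a *: x | a in [set a : F | a != 0], x in Nbar]].

(* Every element of N_2 (resp. N_4) is (w2 + omega, w3, w1) with w2 in Delta_B
   and w1 outside Delta_B (for N_4 because w1 is a nonzero vector of Delta_A and
   A, B are disjoint).  Since Delta_B is a subspace, the first block and the
   choice of omega determine w2, so the map from admissible tuples is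
   injective; all elements are nonzero, and the admissible tuples are closed
   under scaling by F^*.  A scale-closed duplicate-free list of nonzero vectors
   is the disjoint union of the punctured lines through its vectors whose first
   nonzero coordinate is 1. *)

From HB Require Import structures.
From mathcomp Require Import all_boot all_order all_algebra all_field.
Set Implicit Arguments. Unset Strict Implicit.
Import GRing.Theory.
Local Open Scope ring_scope.

Section Pivot.
Variables (F : fieldType) (n : nat).
Implicit Types (x y : 'rV[F]_n) (a : F).

Definition pivot x : F :=
  if [pick i | x 0 i != 0] is Some i then x 0 i else 0.

Lemma pivotZ a x : a != 0 -> pivot (a *: x) = a * pivot x.
Proof.
move=> a0; rewrite /pivot (@eq_pick _ _ (fun i => x 0 i != 0)); last first.
  by move=> i /=; rewrite mxE mulf_eq0 (negbTE a0).
by case: pickP => [i _|_]; rewrite ?mxE ?mulr0.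
Qed.

Lemma pivot_eq0 x : (pivot x == 0) = (x == 0).
Proof.
rewrite /pivot; case: pickP => [i /= xi|x0].
  by rewrite (negbTE xi); apply/esym; apply: contraNF xi => /eqP->; rewrite mxE.
by rewrite eqxx; apply/esym/eqP/rowP => j; rewrite mxE; apply/eqP/negbFE/x0.
Qed.

Lemma scale_pivot1_inj a b x y :
  a != 0 -> b != 0 -> pivot x = 1 -> pivot y = 1 ->
  a *: x = b *: y -> a = b /\ x = y.
Proof.
move=> a0 b0 px py axby.
have ab : a = b by have := congr1 pivot axby; rewrite !pivotZ // px py !mulr1.
by subst b; split=> //; exact: (can_inj (scalerK a0) axby).
Qed.

Lemma vline_pivot1_inj x y :
  pivot x = 1 -> pivot y = 1 -> <[x]>%VS = <[y]>%VS -> x = y.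
Proof.
move=> px py xy; have /vlineP[b yb] : y \in <[x]>%VS by rewrite xy memv_line.
have /norP[b0 _] : ~~ ((b == 0) || (x == 0)).
  by rewrite -scaler_eq0 -yb -pivot_eq0 py oner_eq0.
have b1 : b = 1 by rewrite -py yb pivotZ // px mulr1.
by rewrite yb b1 scale1r.
Qed.

End Pivot.

Section ScaleClosed.
Variables (F : finFieldType) (n : nat) (N : seq 'rV[F]_n).
Hypotheses (uniqN : uniq N) (N0 : 0 \notin N).
Hypothesis scale_closed : forall a x, a != 0 -> x \in N -> a *: x \in N.

Let Nbar := [set x in N | pivot x == 1].

Lemma scale_normalized_eq :
  [set x in N] = [set a *: x | a in [set a : F | a != 0], x in Nbar].
Proof.
apply/setP => z; apply/idP/imset2P => [|[a x]]; last first.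
  by rewrite !inE => a0 /andP[xN _] ->; apply: scale_closed.
rewrite inE => zN; have pz : pivot z != 0 by rewrite pivot_eq0; apply: contraNneq N0 => <-.
exists (pivot z) ((pivot z)^-1 *: z); rewrite ?inE ?scalerKV //.
by rewrite scale_closed ?invr_eq0 //= pivotZ ?invr_eq0 // mulVf.
Qed.

Lemma projective_reduction_scale_closed : projective_reduction N.
Proof.
split=> //; exists Nbar; split.
- by move=> x; rewrite inE => /andP[].
- have inj : {in setX [set a : F | a != 0] Nbar &,
               injective (uncurry (fun a x => a *: x))}.
    move=> [a x] [b y]; rewrite !inE /= => /and3P[a0 _ /eqP px] /and3P[b0 _ /eqP py].
    by case/(scale_pivot1_inj a0 b0 px py) => -> ->.
  rewrite -(card_uniqP uniqN) -(cardsE (mem N)) scale_normalized_eq curry_imset2X.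
  rewrite (card_in_imset inj) cardsX mulnC.
  have -> : [set a : F | a != 0] = [set~ 0] by apply/setP => a; rewrite !inE.
  by rewrite cardsC1 subn1.
- move=> x; rewrite inE => /andP[xN _].
  have x0 : x != 0 by apply: contraNneq N0 => <-.
  by rewrite dim_vline x0.
- move=> x y; rewrite !inE => /andP[_ /eqP px] /andP[_ /eqP py].
  exact: contra_neq (vline_pivot1_inj px py).
- exact: scale_normalized_eq.
Qed.

End ScaleClosed.

Section Delta.
Variables (F : finFieldType) (m : nat).
Implicit Types (P Q : {set 'I_m}) (v w : 'rV[F]_m) (a : F).

Lemma suppZ a v : a != 0 -> supp (a *: v) = supp v.
Proof. by move=> a0; apply/setP => i; rewrite !inE mxE mulf_eq0 (negbTE a0). Qed.

Lemma inDeltaZ P a v : a != 0 -> inDelta P (a *: v) = inDelta P v.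
Proof. by move=> a0; rewrite /inDelta suppZ. Qed.

Lemma inDeltaB P v w : inDelta P v -> inDelta P w -> inDelta P (v - w).
Proof.
move=> /subsetP sv /subsetP sw; apply/subsetP => i; apply: contraTT => iNP.
rewrite inE negbK !mxE.
have /eqP-> : v 0 i == 0 by apply: contraNT iNP => vi; apply: sv; rewrite inE.
have /eqP-> : w 0 i == 0 by apply: contraNT iNP => wi; apply: sw; rewrite inE.
by rewrite subr0.
Qed.

Lemma inDeltaI P Q v : inDelta (P :&: Q) v = inDelta P v && inDelta Q v.
Proof. exact: subsetI. Qed.

Lemma inDelta0 v : inDelta set0 v = (v == 0).
Proof.
rewrite /inDelta subset0; apply/eqP/eqP => [s0|->]; last first.
  by apply/setP => i; rewrite !inE mxE eqxx.
by apply/rowP => i; rewrite mxE; have := in_set0 i; rewrite -s0 inE => /negbFE/eqP.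
Qed.

Lemma inDelta_zero P : inDelta P (0 : 'rV[F]_m).
Proof. by apply/subsetP => i; rewrite inE mxE eqxx. Qed.

End Delta.

Section Tuples.
Variables (F : finFieldType) (m : nat).
Notation quad := ('rV[F]_m * 'rV[F]_m * 'rV[F]_m * bool)%type.

Definition scale_tuple (a : F) (t : quad) : quad :=
  let '(w1, w2, w3, b) := t in (a *: w1, a *: w2, a *: w3, b).

Lemma eltZ a t : a *: elt t = elt (scale_tuple a t).
Proof.
case: t => [[[w1 w2] w3] b].
by rewrite /= /triple /omega !scale_row_mx scalerDr; case: b; rewrite ?scaler0.
Qed.

(* Equal images force w2 - w2' to be 0 or +-w1, and the latter would put w1 in Delta_B. *)
Lemma elt_inj_in (B : {set 'I_m}) (t t' : quad) :
  let '(w1, w2, _, _) := t in let '(w1', w2', _, _) := t' in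
  inDelta B w2 -> inDelta B w2' -> ~~ inDelta B w1 -> elt t = elt t' -> t = t'.
Proof.
case: t t' => [[[w1 w2] w3] b] [[[w1' w2'] w3'] b'] h2 h2' h1.
rewrite /elt /triple => /eq_row_mx[/eq_row_mx[E1 E3] E2]; subst w1' w3'.
move: E1; rewrite /omega; case: b b' => [] [] E1; rewrite ?addr0 in E1.
- by rewrite (addIr _ E1).
- by move: h1; rewrite (_ : w1 = w2' - w2) ?inDeltaB // -E1 addrC addKr.
- by move: h1; rewrite (_ : w1 = w2 - w2') ?inDeltaB // E1 addrC addKr.
- by rewrite E1.
Qed.

Lemma projective_reduction_elt (B : {set 'I_m}) (P : {pred quad}) :
  (forall t, t \in P -> let '(w1, w2, _, _) := t in
     inDelta B w2 && ~~ inDelta B w1) ->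
  (forall a t, a != 0 -> t \in P -> scale_tuple a t \in P) ->
  projective_reduction [seq elt t | t <- enum P].
Proof.
move=> PB Pscale; apply: projective_reduction_scale_closed.
- rewrite map_inj_in_uniq ?enum_uniq // => t t'; rewrite !mem_enum.
  move: (PB t) (PB t') (@elt_inj_in B t t').
  case: t t' => [[[w1 w2] w3] b] [[[w1' w2'] w3'] b'] Pt Pt' inj /Pt/andP[h2 h1].
  by case/Pt'/andP => h2' _; apply: inj.
- apply/mapP => -[[[[w1 w2] w3] b]]; rewrite mem_enum => /PB/andP[_].
  rewrite /= /triple -!row_mx0 => + /eq_row_mx[_ w10].
  by rewrite -w10 inDelta_zero.
- move=> a x a0 /mapP[t Pt ->]; rewrite eltZ; apply: map_f.
  by rewrite mem_enum Pscale // -mem_enum.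
Qed.

End Tuples.

Theorem mainTheorem11 (F : finFieldType) (m : nat) (A B C : {set 'I_m}) :
  (2 <= m)%N -> A != set0 -> B != set0 -> C != set0 ->
  ((#|A| < m)%N -> B \subset A -> projective_reduction (N2 F A B C)) /\
  ((#|C| < m)%N -> (2 <= #|A|)%N -> A :&: B = set0 -> projective_reduction (N4 F A B C)).
Proof.
move=> _ _ _ _; split=> [_ sBA | _ _ AB0]; apply: (projective_reduction_elt (B := B)).
- move=> [[[w1 w2] w3] b] /and3P[h1 h2 _]; rewrite h2.
  by apply: contra h1 => /subset_trans; apply.
- by move=> a [[[w1 w2] w3] b] a0; rewrite !inE /= !inDeltaZ.
- move=> [[[w1 w2] w3] b] /and4P[h1 w10 h2 _]; rewrite h2 /=.
  by apply: contra w10 => h1B; rewrite -inDelta0 -AB0 inDeltaI h1.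
- move=> a [[[w1 w2] w3] b] a0; rewrite !inE /= !inDeltaZ // scaler_eq0.
  by rewrite (negbTE a0).
Qed.
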